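(* Consider a finite reward-free MDP with occupancy polytope $\Phi$, let $d_e^\star\in\Phi$, $\delta\ge0$, and let $\mathcal D=\{(d_e^k,\epsilon^k)\}_{k=1}^K$ with $d_e^k\in\Phi$, $\epsilon^k\ge0$. Let $\tilde r$ be a reward with $\mathrm{subopt}(\tilde r,d_e^\star)>\delta$. Suppose there exist $r'\in\mathcal R(d_e^\star)$ and $k\in[K]$ such that \[(\tilde r-r')^\top(d_e^\star-d_e^k)\ge0\quad\text{and}\quad\mathrm{subopt}(r',d_e^k)\in[\epsilon^k-\delta,\epsilon^k].\] Then $\mathrm{subopt}(\tilde r,d_e^k)>\epsilon^k$.
   Context: The MDP has finite $S$, $A$, transitions $P$, initial distribution $\mu_0$, discount $\gamma\in(0,1)$; $(Md)(s)=\sum_a d(s,a)-\gamma\sum_{s',a'}P(s\mid s',a')d(s',a')$ and $\Phi=\{d\ge0:Md=(1-\gamma)\mu_0\}$. Rewards are $r\in\Delta(S\times A)$. $\mathrm{subopt}(r,d):=\max_{\tilde d\in\Phi}r^\top\tilde d-r^\top d$; $\mathcal R(d_e^\star):=\{r\in\Delta(S\times A):\mathrm{subopt}(r,d_e^\star)=0\}$. *)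

From mathcomp Require Import all_boot all_order all_algebra.
From mathcomp Require Import all_classical all_reals.
Set Implicit Arguments. Unset Strict Implicit. Unset Printing Implicit Defensive.
Import Order.TTheory GRing.Theory Num.Theory.
Local Open Scope ring_scope.
Local Open Scope classical_set_scope.

Section MDP.
Variables (R : realType) (S A : finType).

Definition is_kernel (P : S -> A -> S -> R) : Prop :=
  (forall s a s', 0 <= P s a s') /\ (forall s a, \sum_(s' : S) P s a s' = 1).

Definition is_dist_S (mu : S -> R) : Prop :=
  (forall s, 0 <= mu s) /\ \sum_(s : S) mu s = 1.

Definition is_reward (r : S * A -> R) : Prop :=
  (forall sa, 0 <= r sa) /\ \sum_(sa : S * A) r sa = 1.

Definition flowM (P : S -> A -> S -> R) (gamma : R) (d : S * A -> R) (s : S) : R :=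
  \sum_(a : A) d (s, a) - gamma * \sum_(sa : S * A) P sa.1 sa.2 s * d sa.

Definition Phi (P : S -> A -> S -> R) (mu0 : S -> R) (gamma : R) : set (S * A -> R) :=
  [set d | (forall sa, 0 <= d sa) /\
           (forall s, flowM P gamma d s = (1 - gamma) * mu0 s)].

Definition inner (r d : S * A -> R) : R := \sum_(sa : S * A) r sa * d sa.

Definition subopt (P : S -> A -> S -> R) (mu0 : S -> R) (gamma : R)
    (r d : S * A -> R) : R :=
  sup [set inner r d' | d' in Phi P mu0 gamma] - inner r d.

Definition feasR (P : S -> A -> S -> R) (mu0 : S -> R) (gamma : R)
    (dstar : S * A -> R) : set (S * A -> R) :=
  [set r | is_reward r /\ subopt P mu0 gamma r dstar = 0].

End MDP.

From mathcomp Require Import all_boot all_order all_algebra.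
From mathcomp Require Import all_classical all_reals.
From mathcomp Require Import ring lra.
Set Implicit Arguments. Unset Strict Implicit. Unset Printing Implicit Defensive.
Import Order.TTheory GRing.Theory Num.Theory.
Local Open Scope ring_scope.

(* The optimal value cancels in any difference of suboptimalities of one
   reward, so the cross term (rt - r')^T (d* - dk) equals
   [subopt rt dk - subopt rt d*] - [subopt r' dk - subopt r' d*].  With
   subopt r' d* = 0, its nonnegativity gives
   subopt rt dk >= subopt rt d* + subopt r' dk > delta + (eps k - delta). *)

Section Suboptimality.
Variables (R : realType) (S A : finType).
Implicit Types (r d : S * A -> R).

Lemma innerBl r1 r2 d :
  inner (fun sa => r1 sa - r2 sa) d = inner r1 d - inner r2 d.
Proof. by rewrite /inner -sumrB; apply: eq_bigr => sa _; rewrite mulrBl. Qed.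

Lemma innerBr r d1 d2 :
  inner r (fun sa => d1 sa - d2 sa) = inner r d1 - inner r d2.
Proof. by rewrite /inner -sumrB; apply: eq_bigr => sa _; rewrite mulrBr. Qed.

Variables (P : S -> A -> S -> R) (mu0 : S -> R) (gamma : R).

Lemma subopt_sub r d1 d2 :
  subopt P mu0 gamma r d2 - subopt P mu0 gamma r d1 = inner r d1 - inner r d2.
Proof. rewrite /subopt; ring. Qed.

Lemma inner_cross_subopt r1 r2 d1 d2 :
  inner (fun sa => r1 sa - r2 sa) (fun sa => d1 sa - d2 sa) =
    (subopt P mu0 gamma r1 d2 - subopt P mu0 gamma r1 d1)
  - (subopt P mu0 gamma r2 d2 - subopt P mu0 gamma r2 d1).
Proof. by rewrite innerBl !innerBr !subopt_sub. Qed.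

End Suboptimality.

Theorem mainTheorem8 (R : realType) (S A : finType)
    (P : S -> A -> S -> R) (mu0 : S -> R) (gamma : R)
    (dstar : S * A -> R) (delta : R) (K : nat)
    (de : 'I_K -> S * A -> R) (eps : 'I_K -> R)
    (rt r' : S * A -> R) (k : 'I_K) :
  is_kernel P -> is_dist_S mu0 -> 0 < gamma < 1 ->
  Phi P mu0 gamma dstar -> 0 <= delta ->
  (forall j, Phi P mu0 gamma (de j)) -> (forall j, 0 <= eps j) ->
  is_reward rt -> subopt P mu0 gamma rt dstar > delta ->
  feasR P mu0 gamma dstar r' ->
  inner (fun sa => rt sa - r' sa) (fun sa => dstar sa - de k sa) >= 0 ->
  eps k - delta <= subopt P mu0 gamma r' (de k) <= eps k ->
  subopt P mu0 gamma rt (de k) > eps k.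
Proof.
move=> _ _ _ _ _ _ _ _ gap_rt_star [_ opt_r'_star].
rewrite (inner_cross_subopt P mu0 gamma) opt_r'_star => cross /andP[gap_r'_k _].
lra.
Qed.
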